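(* For every integer $p\ge1$, $$B_{2p}=-\frac{(2p)!}{2^{2p}-2}\det U_p,\qquad E_{2p}=(2p)!\det V_p,$$ where $U_p$ and $V_p$ are $(p+1)\times(p+1)$ matrices (rows and columns indexed $0,\dots,p$) whose last column is $(1,0,\dots,0)^T$ and whose first $p$ columns are given, for $0\le j\le p-1$, by $(U_p)_{ij}=1/(2(i-j)+1)!$ and $(V_p)_{ij}=1/(2(i-j))!$ when $i\ge j$, and $(U_p)_{ij}=(V_p)_{ij}=0$ when $i<j$.
   Context: The Bernoulli numbers are defined by $\sum_{n\ge0}B_nz^n/n!=z/(e^z-1)$, and the Euler numbers by $\sum_{n\ge0}E_nz^n/n!=1/\cosh z$. *)

From mathcomp Require Import all_boot all_order all_algebra.
Set Implicit Arguments. Unset Strict Implicit. Unset Printing Implicit Defensive.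
Import Order.TTheory GRing.Theory Num.Theory.
Local Open Scope ring_scope.

Definition expm1_coef (m : nat) : rat := if m == 0%N then 0 else (m`!%:R)^-1.
Definition cosh_coef (m : nat) : rat := if odd m then 0 else (m`!%:R)^-1.

(* B is the Bernoulli sequence: sum_n B_n z^n/n! = z/(e^z-1), stated as the
   formal power series identity (e^z - 1) * sum_n B_n z^n/n! = z,
   coefficient by coefficient. *)
Definition is_bernoulli (B : nat -> rat) : Prop :=
  forall n : nat,
    \sum_(k < n.+1) (B k / (k`!)%:R) * expm1_coef (n - k) = (n == 1%N)%:R.

(* E is the Euler sequence: sum_n E_n z^n/n! = 1/cosh z, stated as the
   formal power series identity cosh z * sum_n E_n z^n/n! = 1. *)
Definition is_euler (E : nat -> rat) : Prop :=
  forall n : nat,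
    \sum_(k < n.+1) (E k / (k`!)%:R) * cosh_coef (n - k) = (n == 0%N)%:R.

Definition U_mx (p : nat) : 'M[rat]_(p.+1) :=
  \matrix_(i < p.+1, j < p.+1)
    if (j == p :> nat) then (i == 0 :> nat)%:R
    else if (j <= i)%N then (((2 * (i - j)).+1)`!%:R)^-1 else 0.

Definition V_mx (p : nat) : 'M[rat]_(p.+1) :=
  \matrix_(i < p.+1, j < p.+1)
    if (j == p :> nat) then (i == 0 :> nat)%:R
    else if (j <= i)%N then (((2 * (i - j)))`!%:R)^-1 else 0.

From mathcomp Require Import all_boot all_order all_algebra.
From mathcomp Require Import zify ring.
Set Implicit Arguments. Unset Strict Implicit. Unset Printing Implicit Defensive.
Import Order.TTheory GRing.Theory Num.Theory.
Local Open Scope ring_scope.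

(* Let a_0 = 1 and let c be the reciprocal series of a up to order p, i.e.
   sum_k a_k c_(n-k) = [n = 0] for n <= p.  Multiplying the matrix with
   columns (a_(i-j))_i for j < p and last column e_0 on the left by the
   unitriangular Toeplitz matrix (c_(i-j)) gives the identity matrix with last
   column (c_0, ..., c_p), so its determinant is c_p.  For V_p, a_k = 1/(2k)!
   are the coefficients of cosh z, whose reciprocal 1/cosh z has coefficients
   c_n = E_(2n)/(2n)!.  For U_p, a_k = 1/(2k+1)! are the coefficients of
   sinh z / z, and z / sinh z = 2 b(z) - b(2z) with b(z) = z/(e^z - 1), whose
   even coefficients are (2 - 2^(2n)) B_(2n)/(2n)!.  The power series
   identities are proved for polynomials truncated modulo z^N. *)

Lemma big_ord_even_odd (V : nmodType) (F : nat -> V) (n : nat) :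
  \sum_(j < 2 * n) F j = \sum_(k < n) F (2 * k)%N + \sum_(k < n) F (2 * k).+1.
Proof.
elim: n => [|n IH]; first by rewrite !big_ord0 addr0.
have -> : (2 * n.+1 = (2 * n).+2)%N by rewrite mulnS.
rewrite !big_ord_recr /= IH.
by rewrite -!addrA; congr (_ + _); rewrite addrCA.
Qed.

Lemma big_ord_interval (V : nmodType) (F : nat -> V) (n i j : nat) :
  (j <= i < n)%N ->
  (forall k, (k < j)%N -> F k = 0) -> (forall k, (i < k)%N -> F k = 0) ->
  \sum_(k < n) F k = \sum_(l < (i - j).+1) F (l + j)%N.
Proof.
move=> /andP[ji iN] Fj Fi.
rewrite -(big_mkord xpredT F) -(big_mkord xpredT (fun l => F (l + j)%N)).
rewrite (@big_cat_nat _ _ _ j 0%N n) //=; last by lia.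
rewrite big_nat_cond big1 ?add0r => [|k /andP[/andP[_ kj] _]]; last exact: Fj.
rewrite (@big_cat_nat _ _ _ i.+1 j n _ _ (leqW ji) iN) /= addrC big_nat_cond.
rewrite big1 ?add0r => [|k /andP[/andP[ik _] _]]; last exact: Fi.
by rewrite -{1}(add0n j) big_addn subSn.
Qed.

Section ToeplitzDeterminant.
Variables (R : comNzRingType) (p : nat).

Definition lower_toeplitz_mx (c : nat -> R) : 'M[R]_p.+1 :=
  \matrix_(i, j) if (j <= i)%N then c (i - j)%N else 0.

Definition toeplitz_e0_mx (a : nat -> R) : 'M[R]_p.+1 :=
  \matrix_(i, j) if (j == p :> nat) then (i == 0 :> nat)%:R
                 else if (j <= i)%N then a (i - j)%N else 0.

Lemma det_lower_toeplitz c : \det (lower_toeplitz_mx c) = c 0%N ^+ p.+1.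
Proof.
rewrite det_trig; last by apply/is_trig_mxP => i j ij; rewrite mxE leqNgt ij.
rewrite (eq_bigr (fun=> c 0%N)) ?prodr_const ?card_ord // => i _.
by rewrite mxE leqnn subnn.
Qed.

Lemma det_lastcol_mx (v : 'I_p.+1 -> R) :
  \det (\matrix_(i, j) if (j == p :> nat) then v i else (i == j :> nat)%:R) =
  v ord_max.
Proof.
rewrite -det_tr det_trig; last first.
  apply/is_trig_mxP => i j ij; rewrite !mxE.
  by rewrite (ltn_eqF (leq_trans ij (leq_ord j))) (gtn_eqF ij).
rewrite big_ord_recr /= big1 ?mul1r => [|i _]; first by rewrite !mxE eqxx.
by rewrite !mxE eqxx (ltn_eqF (ltn_ord i)).
Qed.

Variables (a c : nat -> R).
Hypothesis ac_inverse :
  forall n, (n <= p)%N -> \sum_(k < n.+1) a k * c (n - k)%N = (n == 0%N)%:R.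

Lemma mul_lower_toeplitz_e0 :
  lower_toeplitz_mx c *m toeplitz_e0_mx a =
  \matrix_(i, j) if (j == p :> nat) then c i else (i == j :> nat)%:R.
Proof.
apply/matrixP => i j; rewrite !mxE.
have [jp|jNp] := eqVneq (j : nat) p.
  rewrite (bigD1 ord0) //= big1 ?addr0 => [|k kN0]; rewrite !mxE jp eqxx.
    by rewrite /= mulr1 subn0.
  by move: kN0; rewrite -val_eqE => /negbTE ->; rewrite mulr0.
pose F k := if (k <= i)%N && (j <= k)%N then c (i - k)%N * a (k - j)%N else 0.
rewrite (eq_bigr (fun k : 'I_p.+1 => F k)) => [|k _]; last first.
  rewrite !mxE (negbTE jNp) /F.
  by case: (k <= i)%N; case: (j <= k)%N; rewrite ?mulr0 ?mul0r.
have [ji|ij] := leqP j i; last first.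
  rewrite big1 ?(ltn_eqF ij) // => k _; rewrite /F.
  by case: leqP => //= ki; rewrite leqNgt (leq_ltn_trans ki ij).
have Fj k : (k < j)%N -> F k = 0 by move=> kj; rewrite /F (leqNgt j k) kj andbF.
have Fi k : (i < k)%N -> F k = 0 by move=> ik; rewrite /F (leqNgt k i) ik.
rewrite (big_ord_interval _ Fj Fi) ?ji ?ltn_ord //.
have -> : (i == j :> nat) = (i - j == 0)%N by apply/eqP/eqP; lia.
rewrite -ac_inverse ?(leq_trans (leq_subr _ _) (leq_ord i)) //.
apply: eq_bigr => [[l /= hl]] _; rewrite /F.
rewrite (_ : (l + j <= i)%N) ?leq_addl /=; last by lia.
by rewrite mulrC addnK subnDA subnAC.
Qed.

Theorem det_toeplitz_e0 : a 0%N = 1 -> \det (toeplitz_e0_mx a) = c p.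
Proof.
move=> a0; have c0 : c 0%N = 1.
  by have := ac_inverse (leq0n p); rewrite big_ord1 a0 mul1r.
have := congr1 determinant mul_lower_toeplitz_e0.
by rewrite det_mulmx det_lower_toeplitz c0 expr1n mul1r det_lastcol_mx.
Qed.

End ToeplitzDeterminant.

Lemma coef_poly_mul (R : nzSemiRingType) (N i : nat) (f g : nat -> R) :
  (i < N)%N ->
  (\poly_(k < N) f k * \poly_(k < N) g k)`_i = \sum_(k < i.+1) f k * g (i - k)%N.
Proof.
move=> iN; rewrite coefM; apply: eq_bigr => k _.
by rewrite !coef_poly (leq_ltn_trans (leq_ord k) iN) (leq_ltn_trans (leq_subr _ _) iN).
Qed.

Lemma coef_mul_odd (R : nzSemiRingType) (P Q : {poly R}) (m : nat) :
  (forall k, P`_(2 * k) = 0) ->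
  (P * Q)`_(2 * m).+1 = \sum_(k < m.+1) P`_(2 * k).+1 * Q`_(2 * (m - k)).
Proof.
move=> P_even; rewrite coefM.
have -> : ((2 * m).+2 = 2 * m.+1)%N by rewrite mulnS.
rewrite (big_ord_even_odd (fun j => P`_j * Q`_((2 * m).+1 - j))).
rewrite big1 ?add0r => [|k _]; last by rewrite P_even mul0r.
by apply: eq_bigr => k _; rewrite subSS -mulnBr.
Qed.

Lemma dvdp_XnP (R : idomainType) (N : nat) (q : {poly R}) :
  reflect (forall i, (i < N)%N -> q`_i = 0) ('X^N %| q).
Proof.
rewrite /dvdp -Pdiv.IdomainMonic.take_poly_modp.
apply: (iffP eqP) => [qN i iN | q0].
  by move/polyP/(_ i): qN; rewrite coef_take_poly iN coef0.
by apply/polyP => i; rewrite coef_take_poly coef0; case: ltnP => // /q0.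
Qed.

Lemma natr_fact_neq0 (R : numFieldType) (n : nat) : (n`!%:R : R) != 0.
Proof. by rewrite pnatr_eq0 -lt0n fact_gt0. Qed.

Lemma sum_exp_coefM (R : numFieldType) (x y : R) (n : nat) :
  \sum_(k < n.+1) (x ^+ k / k`!%:R) * (y ^+ (n - k) / (n - k)`!%:R) =
  (x + y) ^+ n / n`!%:R.
Proof.
rewrite addrC exprDn mulr_suml; apply: eq_bigr => k _.
have kn : (k <= n)%N by rewrite -ltnS.
have n_fact : (n`!%:R : R) = 'C(n, k)%:R * k`!%:R * (n - k)`!%:R.
  by rewrite -!natrM -mulnA bin_fact.
have binN0 : ('C(n, k)%:R : R) != 0 by rewrite pnatr_eq0 -lt0n bin_gt0.
rewrite -mulr_natr n_fact; field.
by rewrite binN0 !natr_fact_neq0.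
Qed.

Definition trunc_exp (R : numFieldType) (N : nat) (x : R) : {poly R} :=
  \poly_(i < N) (x ^+ i / i`!%:R).

Lemma trunc_expD (R : numFieldType) (N : nat) (x y : R) :
  'X^N %| trunc_exp N x * trunc_exp N y - trunc_exp N (x + y).
Proof.
apply/dvdp_XnP => i iN.
by rewrite coefB coef_poly_mul // coef_poly iN sum_exp_coefM subrr.
Qed.

Lemma trunc_exp0 (R : numFieldType) (N : nat) : 'X^N %| trunc_exp N (0 : R) - 1.
Proof.
apply/dvdp_XnP => i iN; rewrite coefB coef1 coef_poly iN expr0n.
by case: i {iN} => [|i]; rewrite ?fact0 ?divr1 ?mul0r subrr.
Qed.

Lemma trunc_exp_sub1 (N : nat) (c : rat) :
  trunc_exp N.+1 c - 1 = \poly_(i < N.+1) (c ^+ i * expm1_coef i).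
Proof.
apply/polyP => i; rewrite coefB coef1 !coef_poly /expm1_coef.
case: i => [|i] /=; first by rewrite fact0 divr1 subrr mulr0.
by case: ifP; rewrite subr0.
Qed.

Section BernoulliRelation.
Variables (B : nat -> rat) (hB : is_bernoulli B).

Definition bernoulli_egf (N : nat) (c : rat) : {poly rat} :=
  \poly_(i < N) (c ^+ i * (B i / i`!%:R)).

Lemma bernoulli_egf_expm1 (N : nat) (c : rat) :
  'X^(N.+1) %| bernoulli_egf N.+1 c * (trunc_exp N.+1 c - 1) - c *: 'X.
Proof.
apply/dvdp_XnP => i iN; rewrite trunc_exp_sub1 coefB coef_poly_mul // coefZ coefX.
rewrite (eq_bigr (fun k : 'I_i.+1 => c ^+ i * (B k / k`!%:R * expm1_coef (i - k)))).
  by rewrite -mulr_sumr hB; case: eqP => [->|_]; rewrite ?expr1 ?mulr0 ?subrr.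
move=> k _; have ki : (k <= i)%N by rewrite -ltnS.
by rewrite -[in c ^+ i](subnKC ki) exprD; ring.
Qed.

Lemma bernoulli_even_recurrence (m : nat) :
  \sum_(k < m.+1) ((2 * k).+1`!%:R)^-1 *
    ((2 - 2 ^+ (2 * (m - k))) * B (2 * (m - k))%N / (2 * (m - k))`!%:R)
  = (m == 0%N)%:R.
Proof.
set n := (2 * m).+1.
pose e (x : rat) := trunc_exp n.+1 x; pose b c := bernoulli_egf n.+1 c.
have exp_inv : 'X^(n.+1) %| e 1 * e (-1) - 1.
  have := dvdp_add (trunc_expD n.+1 1 (-1)) (@trunc_exp0 rat n.+1).
  by rewrite subrr addrA subrK.
have exp_sq : 'X^(n.+1) %| e 1 * e 1 - e 2 := trunc_expD n.+1 1 1.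
have egf1 : 'X^(n.+1) %| b 1 * (e 1 - 1) - 'X.
  by have := bernoulli_egf_expm1 n 1; rewrite scale1r.
have egf2 : 'X^(n.+1) %| b 2 * (e 2 - 1) - 'X *+ 2.
  by have := bernoulli_egf_expm1 n 2; rewrite scaler_nat.
(* (e^z - e^-z) (2 b(z) - b(2z)) = 2z, certified by the four congruences. *)
have key : 'X^(n.+1) %| (e 1 - e (-1)) * (b 1 *+ 2 - b 2) - 'X *+ 2.
  have -> : (e 1 - e (-1)) * (b 1 *+ 2 - b 2) - 'X *+ 2 =
      (e (-1) * (e 1 + 1) *+ 2) * (b 1 * (e 1 - 1) - 'X)
      + (- e (-1)) * (b 2 * (e 2 - 1) - 'X *+ 2)
      + (- (e (-1) * b 2)) * (e 1 * e 1 - e 2)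
      + (e 1 * b 2 - e 1 * b 1 *+ 2 + 'X *+ 2) * (e 1 * e (-1) - 1) by ring.
  by rewrite !dvdp_add ?dvdp_mull.
have sign_even k : (-1) ^+ (2 * k) = 1 :> rat by rewrite exprM sqrrN expr1n.
move/dvdp_XnP/(_ n (ltnSn n)): key.
rewrite coefB coefMn coefX coef_mul_odd; last first.
  by move=> k; rewrite coefB !coef_poly; case: ifP; rewrite ?sign_even ?expr1n ?subrr.
have -> : (n == 1)%N = (m == 0)%N by rewrite /n eqSS muln_eq0.
rewrite (eq_bigr (fun k : 'I_m.+1 => 2 * (((2 * k).+1`!%:R)^-1 *
    ((2 - 2 ^+ (2 * (m - k))) * B (2 * (m - k))%N / (2 * (m - k))`!%:R)))) => [|k _].
  rewrite -mulr_sumr => /eqP; rewrite subr_eq add0r => /eqP two_sum.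
  by apply: (@mulfI _ 2) => //; rewrite two_sum mulr_natl.
have km : (k <= m)%N by rewrite -ltnS.
rewrite !coefB coefMn !coef_poly ifT ?ifT /n; try lia.
by rewrite !expr1n (exprS (-1)) sign_even; ring.
Qed.
End BernoulliRelation.

Lemma euler_even_recurrence (E : nat -> rat) (hE : is_euler E) (m : nat) :
  \sum_(k < m.+1) ((2 * k)`!%:R)^-1 * (E (2 * (m - k))%N / (2 * (m - k))`!%:R)
  = (m == 0%N)%:R.
Proof.
have := hE (2 * m)%N; rewrite (reindex_inj rev_ord_inj) /=.
rewrite (eq_bigr (fun k : 'I_(2 * m).+1 =>
    E (2 * m - k)%N / (2 * m - k)`!%:R * cosh_coef k)) => [|k _]; last first.
  by rewrite subSS subKn // -ltnS.
rewrite big_ord_recr /= (big_ord_even_odd (fun k =>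
    E (2 * m - k)%N / (2 * m - k)`!%:R * cosh_coef k)).
rewrite [X in _ + X + _]big1 ?addr0 => [|k _]; last first.
  by rewrite /cosh_coef /= oddM /= mulr0.
have -> : (2 * m == 0)%N = (m == 0)%N by rewrite muln_eq0.
move=> <-.
rewrite big_ord_recr /= subnn muln0 subnn /cosh_coef oddM /= mulrC; congr (_ + _).
by apply: eq_bigr => k _; rewrite oddM /= mulnBr mulrC.
Qed.


Theorem mainTheorem7 (p : nat) (hp : (1 <= p)%N)
  (B E : nat -> rat) (hB : is_bernoulli B) (hE : is_euler E) :
  B (2 * p)%N = - (((2 * p)`!)%:R / (2 ^+ (2 * p) - 2)) * \det (U_mx p)
  /\ E (2 * p)%N = ((2 * p)`!)%:R * \det (V_mx p).
Proof.
have fact_neq0 := @natr_fact_neq0 rat (2 * p).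
split.
  have detU : \det (U_mx p) = (2 - 2 ^+ (2 * p)) * B (2 * p)%N / (2 * p)`!%:R.
    apply: (det_toeplitz_e0 (a := fun k => ((2 * k).+1`!%:R)^-1)
      (c := fun n => (2 - 2 ^+ (2 * n)) * B (2 * n)%N / (2 * n)`!%:R)) => [n _|].
      exact: bernoulli_even_recurrence.
    by rewrite muln0 invr1.
  have pow_neq2 : (2 ^+ (2 * p) - 2 : rat) != 0.
    by rewrite subr_eq0 -natrX eqr_nat -[X in _ != X](expn1 2) eqn_exp2l //; lia.
  by rewrite detU; field; rewrite pow_neq2 fact_neq0.
have detV : \det (V_mx p) = E (2 * p)%N / (2 * p)`!%:R.
  apply: (det_toeplitz_e0 (a := fun k => ((2 * k)`!%:R)^-1)
    (c := fun n => E (2 * n)%N / (2 * n)`!%:R)) => [n _|].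
    exact: euler_even_recurrence.
  by rewrite muln0 invr1.
by rewrite detV; field.
Qed.
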